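(* Let $G_1$ and $G_2$ be two vertex-disjoint simple connected graphs with $|V(G_1)|=n_1$, $|V(G_2)|=n_2$, $|E(G_1)|=m_1$, $|E(G_2)|=m_2$. Then the vertex Q-join $G_1\dot{\vee}_Q G_2$ satisfies \[ F(G_1\dot{\vee}_Q G_2)=F(G_1)+F(G_2)+3n_2M_1(G_1)+3n_1M_1(G_2)+M_4(G_1)+3\,ReZM(G_1)+6m_1n_2^{2}+6m_2n_1^{2}+n_1n_2(n_1^2+n_2^2). \]
   Context: For a simple graph $G$ and $v\in V(G)$, $d_G(v)$ is the degree of $v$. Define $M_1(G)=\sum_{v\in V(G)}d_G(v)^2$, $F(G)=\sum_{v\in V(G)}d_G(v)^3$, $M_4(G)=\sum_{v\in V(G)}d_G(v)^4$, and $ReZM(G)=\sum_{uv\in E(G)}d_G(u)d_G(v)\,[d_G(u)+d_G(v)]$. The graph $Q(G)$ is obtained from $G$ by inserting a new vertex into each edge of $G$ (subdividing it) and then joining by an edge each pair of new vertices that lie on adjacent edges of $G$ (edges sharing an end vertex); let $I(G)$ denote the set of these new vertices, so $V(Q(G))=V(G)\cup I(G)$. The vertex Q-join $G_1\dot{\vee}_Q G_2$ is the graph obtained from $Q(G_1)$ and $G_2$ (taken vertex-disjoint) by joining each vertex of $V(G_1)$ to every vertex of $G_2$ by an edge. *)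

From mathcomp Require Import all_boot.
Set Implicit Arguments. Unset Strict Implicit. Unset Printing Implicit Defensive.

Definition simple_graph (V : finType) (e : rel V) : Prop :=
  symmetric e /\ irreflexive e.

Definition connected_graph (V : finType) (e : rel V) : Prop :=
  forall x y : V, connect e x y.

Definition deg (V : finType) (e : rel V) (x : V) : nat := #|[pred y | e x y]|.

Definition edges (V : finType) (e : rel V) : {set {set V}} :=
  [set A : {set V} | [exists x, exists y, e x y && (A == [set x; y])]].

Definition nedges (V : finType) (e : rel V) : nat := #|edges e|.

Definition M1 (V : finType) (e : rel V) : nat := \sum_(v : V) deg e v ^ 2.
Definition Fidx (V : finType) (e : rel V) : nat := \sum_(v : V) deg e v ^ 3.
Definition M4 (V : finType) (e : rel V) : nat := \sum_(v : V) deg e v ^ 4.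
Definition ReZM (V : finType) (e : rel V) : nat :=
  \sum_(A in edges e) ((\prod_(x in A) deg e x) * (\sum_(x in A) deg e x)).

(* the type of edges of G (subdivision vertices I(G)) *)
Definition edge_type (V : finType) (e : rel V) : finType :=
  {A : {set V} | A \in edges e}.

Definition QjoinV (V1 V2 : finType) (e1 : rel V1) : finType :=
  ((V1 + edge_type e1) + V2)%type.

Definition Qjoin_adj (V1 V2 : finType) (e1 : rel V1) (e2 : rel V2)
  (a b : QjoinV V2 e1) : bool :=
  match a, b with
  | inl (inl v), inl (inr A) => v \in val A
  | inl (inr A), inl (inl v) => v \in val A
  | inl (inr A), inl (inr B) =>
      (A != B) && (val A :&: val B != set0)
  | inl (inl _), inr _ => true
  | inr _, inl (inl _) => true
  | inr w, inr w' => e2 w w'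
  | _, _ => false
  end.

Arguments Qjoin_adj {V1 V2} e1 e2 a b.

From mathcomp Require Import all_boot ring.
Set Implicit Arguments. Unset Strict Implicit. Unset Printing Implicit Defensive.

(* In the vertex Q-join a vertex v of G1 has degree d1(v) + n2, a vertex w of
   G2 has degree d2(w) + n1, and the subdivision vertex of an edge uv of G1 has
   degree d1(u) + d1(v): 2 for u and v, plus d1(u) - 1 + d1(v) - 1 edges meeting
   uv.  Expanding the cubes of these degrees and using the handshake lemma
   gives the formula; the edge terms contribute
   sum_uv (d(u) + d(v))^3 = sum_v d(v)^4 + 3 ReZM(G1). *)

Lemma card_sum_indicator (T : finType) (P : {pred T}) :
  #|P| = \sum_(x : T) (x \in P : nat).
Proof. by rewrite -sum1_card big_mkcond. Qed.

Lemma big_set2 (R : Type) (idx : R) (op : Monoid.com_law idx)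
    (T : finType) (x y : T) (F : T -> R) :
  x != y -> \big[op/idx]_(i in [set x; y]) F i = op (F x) (F y).
Proof. by move=> nxy; rewrite big_setU1 ?big_set1 // inE. Qed.

Lemma sum_cube_addn (T : finType) (f : T -> nat) c :
  \sum_x (f x + c) ^ 3 = \sum_x f x ^ 3 + 3 * c * \sum_x f x ^ 2
     + 3 * c ^ 2 * \sum_x f x + #|T| * c ^ 3.
Proof.
have cube_addn x : (f x + c) ^ 3 = f x ^ 3 + 3 * c * f x ^ 2 + 3 * c ^ 2 * f x + c ^ 3.
  by ring.
under eq_bigr => x _ do rewrite cube_addn.
by rewrite !big_split /= -!big_distrr /= sum_nat_const; ring.
Qed.

Section SimpleGraph.

Variables (V : finType) (e : rel V).
Hypothesis simple_e : simple_graph e.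

Definition incident (x : V) : {set {set V}} := [set A in edges e | x \in A].

Lemma in_incident x A : (A \in incident x) = (A \in edges e) && (x \in A).
Proof. by rewrite inE. Qed.

Lemma edges_doubleton A :
  A \in edges e -> exists x y, [/\ e x y, x != y & A = [set x; y]].
Proof.
rewrite inE => /existsP [x /existsP [y /andP [exy /eqP ->]]].
exists x, y; split=> //; apply: contraTneq exy => <-.
by rewrite simple_e.2.
Qed.

Lemma mem_edges x y : e x y -> [set x; y] \in edges e.
Proof.
by move=> exy; rewrite inE; apply/existsP; exists x; apply/existsP; exists y; rewrite exy /=.
Qed.

Lemma card_incident x : #|incident x| = deg e x.
Proof.
have -> : incident x = [set [set x; y] | y in [pred y | e x y]].
  apply/setP => A; rewrite inE; apply/andP/imsetP.
  - case=> /edges_doubleton [u [v [euv _ ->]]].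
    rewrite !inE => /orP[/eqP ->|/eqP ->]; first by exists v.
    by exists u; rewrite 1?setUC // inE /= -(simple_e.1 u v).
  - by case=> y; rewrite inE => exy ->; rewrite mem_edges // !inE eqxx.
rewrite card_in_imset // => y z; rewrite !inE => _ exz xy_xz.
have : z \in [set x; y] by rewrite xy_xz !inE eqxx orbT.
rewrite !inE => /orP[/eqP zx|/eqP //].
by move: exz; rewrite zx simple_e.2.
Qed.

Lemma sum_incidence x : \sum_(A in edges e) (x \in A : nat) = deg e x.
Proof.
rewrite -card_incident card_sum_indicator big_mkcond /=.
by apply: eq_bigr => A _; rewrite [in RHS]inE; case: (A \in edges e).
Qed.

Lemma sum_edges_sum (f : V -> nat) :
  \sum_(A in edges e) \sum_(x in A) f x = \sum_x f x * deg e x.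
Proof.
under eq_bigr => A _ do rewrite big_mkcond /=.
rewrite exchange_big /=; apply: eq_bigr => x _.
rewrite -sum_incidence big_distrr /=; apply: eq_bigr => A _.
by case: (x \in A); rewrite ?muln1 ?muln0.
Qed.

Lemma handshake : \sum_x deg e x = 2 * nedges e.
Proof.
under eq_bigr => x _ do rewrite -[deg e x]mul1n.
rewrite -sum_edges_sum /nedges -sum1_card big_distrr /=.
apply: eq_bigr => A /edges_doubleton [x [y [_ nxy ->]]].
by rewrite big_set2.
Qed.

Lemma incidentI u v : e u v -> incident u :&: incident v = [set [set u; v]].
Proof.
move=> euv; apply/setP => B; rewrite in_setI !in_incident in_set1.
apply/idP/eqP => [|->].
  case/andP=> /andP [/edges_doubleton [x [y [_ nxy ->]]] uB] /andP [_ vB].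
  have nuv : u != v by apply: contraTneq euv => ->; rewrite simple_e.2.
  move: uB vB nuv; rewrite !inE.
  by do 2!case/orP=> /eqP ->; rewrite ?eqxx // setUC.
by rewrite mem_edges // !inE !eqxx orbT.
Qed.

Lemma edges_meeting2 u v :
  [set B in edges e | [set u; v] :&: B != set0] = incident u :|: incident v.
Proof.
apply/setP => B; rewrite !inE -andb_orr; congr (_ && _).
apply/set0Pn/orP => [[z]|[uB|vB]].
- by rewrite !inE => /andP [/orP [/eqP ->|/eqP ->] zB]; [left|right].
- by exists u; rewrite !inE eqxx.
- by exists v; rewrite !inE eqxx orbT.
Qed.

Lemma card_adjacent_edges A : A \in edges e ->
  #|A| + \sum_(B in edges e) ((A != B) && (A :&: B != set0) : nat)
  = \sum_(x in A) deg e x.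
Proof.
move=> eA; have [u [v [euv nuv defA]]] := edges_doubleton eA.
set S := [set B in edges e | A :&: B != set0].
have card_S : #|S| + 1 = deg e u + deg e v.
  by rewrite /S defA edges_meeting2 -(cards1 [set u; v]) -incidentI // cardsUI
    !card_incident.
have A_S : A \in S.
  by rewrite inE eA setIid /=; apply/set0Pn; exists u; rewrite defA !inE eqxx.
have -> : \sum_(B in edges e) ((A != B) && (A :&: B != set0) : nat) = #|S :\ A|.
  rewrite card_sum_indicator big_mkcond /=; apply: eq_bigr => B _.
  by rewrite in_setD1 [B \in S]inE eq_sym; case: (B \in edges e); rewrite ?andbF.
have := cardsD1 A S; rewrite A_S defA big_set2 // cards2 nuv => /= card_S1.
by rewrite -card_S card_S1 addnAC.
Qed.

Lemma sum_edges_cube_deg :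
  \sum_(A in edges e) (\sum_(x in A) deg e x) ^ 3 = M4 e + 3 * ReZM e.
Proof.
have -> : M4 e = \sum_(A in edges e) \sum_(x in A) deg e x ^ 3.
  by rewrite sum_edges_sum; apply: eq_bigr => x _; rewrite -expnSr.
rewrite /ReZM big_distrr -big_split /=.
apply: eq_bigr => A /edges_doubleton [x [y [_ nxy ->]]].
rewrite !big_set2 //=; ring.
Qed.

Lemma sum_edge_type (F : {set V} -> nat) :
  \sum_(A : edge_type e) F (val A) = \sum_(A in edges e) F A.
Proof. by rewrite (big_sub (edges e)). Qed.

End SimpleGraph.

Section QjoinDegrees.

Variables (V1 V2 : finType) (e1 : rel V1) (e2 : rel V2).
Hypothesis simple_e1 : simple_graph e1.

Lemma deg_Qjoin_vertex1 v :
  deg (Qjoin_adj e1 e2) (inl (inl v)) = deg e1 v + #|V2|.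
Proof.
rewrite {1}/deg card_sum_indicator !big_sumType /= big1_eq add0n sum1_card.
rewrite -sum_incidence // -sum_edge_type.
by congr (_ + _); apply: eq_bigr => A _; rewrite inE.
Qed.

Lemma deg_Qjoin_subdivision (A : edge_type e1) :
  deg (Qjoin_adj e1 e2) (inl (inr A)) = \sum_(x in val A) deg e1 x.
Proof.
rewrite {1}/deg card_sum_indicator !big_sumType /= big1_eq addn0.
rewrite -(card_adjacent_edges simple_e1 (valP A)) -sum_edge_type card_sum_indicator.
by congr (_ + _); apply: eq_bigr => B _; rewrite inE.
Qed.

Lemma deg_Qjoin_vertex2 w :
  deg (Qjoin_adj e1 e2) (inr w) = deg e2 w + #|V1|.
Proof.
rewrite /deg card_sum_indicator !big_sumType /= big1_eq addn0 addnC sum1_card.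
by congr (_ + _); rewrite card_sum_indicator; apply: eq_bigr => A _; rewrite inE.
Qed.

End QjoinDegrees.

Theorem theorem5 (V1 V2 : finType) (e1 : rel V1) (e2 : rel V2) :
  simple_graph e1 -> simple_graph e2 ->
  connected_graph e1 -> connected_graph e2 ->
  let n1 := #|V1| in let n2 := #|V2| in
  let m1 := nedges e1 in let m2 := nedges e2 in
  Fidx (Qjoin_adj e1 e2) =
    Fidx e1 + Fidx e2 + 3 * n2 * M1 e1 + 3 * n1 * M1 e2 + M4 e1
    + 3 * ReZM e1 + 6 * m1 * n2 ^ 2 + 6 * m2 * n1 ^ 2
    + n1 * n2 * (n1 ^ 2 + n2 ^ 2).
Proof.
move=> simple_e1 simple_e2 _ _ /=.
rewrite /Fidx !big_sumType /=.
under eq_bigr => v _ do rewrite (deg_Qjoin_vertex1 e2 simple_e1).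
under [X in _ + X + _]eq_bigr => A _ do rewrite (deg_Qjoin_subdivision e2 simple_e1).
under [X in _ + X]eq_bigr => w _ do rewrite deg_Qjoin_vertex2.
rewrite !sum_cube_addn.
rewrite (sum_edge_type e1 (fun A => (\sum_(x in A) deg e1 x) ^ 3)) sum_edges_cube_deg //.
by rewrite !handshake // /M1; ring.
Qed.
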